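(* In a partial synchronized communication system, at any time, the length of a path along a ring between any two robots lying in the same ring is an element of $2\pi\mathbb{N}$ (a nonnegative integer multiple of $2\pi$).
   Context: Model. A system consists of pairwise disjoint unit circles $C_1,\dots,C_n$ in the plane (trajectories) and a communication range $r>0$. Its communication graph $G$ has vertex set $\{C_1,\dots,C_n\}$, $C_i,C_j$ adjacent iff the distance between their centres is at most $2+r$. Positions on a circle are angles (mod $2\pi$). For an edge $(i,j)$, the link position $\phi_{ij}$ is the angle of the point of $C_i$ closest to $C_j$. A schedule $F=(f,g)$ assigns each circle a starting angle $f(C_i)$ and direction $g(C_i)\in\{1,-1\}$; a robot following it on $C_i$ is at $f(C_i)+g(C_i)2\pi t$ at time $t$. $F$ is a synchronization schedule if $g(C_i)=-g(C_j)$ for adjacent circles and robots following $F$ on adjacent $C_i,C_j$ are at $\phi_{ij},\phi_{ji}$ at exactly the same times. A synchronized communication system (SCS) consists of $n$ robots, initially one per circle, following a synchronization schedule, with the switching rule: when a robot on $C_i$ reaches $\phi_{ij}$ and $C_j$ is empty, it instantly passes to $C_j$ and from then on follows the schedule of $C_j$; if $C_j$ has a robot, they meet and each stays on its circle. A partial SCS arises by letting some robots leave (possibly at different times); remaining robots never leave. Rings. Trace a point moving along a circle $C_i$ in direction $g(C_i)$; whenever it reaches a link position $\phi_{ij}$ of its current circle, it passes to $C_j$ at $\phi_{ji}$ and continues in direction $g(C_j)$. The closed, directed curve traced is a ring; the circles decompose into rings overlapping only at link positions. A path along a ring from one point to another follows the ring in its direction of motion; its length is the total length of the circle arcs it consists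 of (passing between circles at link positions costs no length). A robot is in a ring if it lies on a point of that ring. *)

From Stdlib Require Import Reals ZArith.
From mathcomp Require Import ssreflect ssrfun ssrbool eqtype ssrnat fintype.

Set Implicit Arguments.
Unset Strict Implicit.

Local Open Scope R_scope.

(* A system: n unit circles C_i with centres (cx i, cy i), communication
   range rng, and a schedule F = (start, dir): a robot following F on C_i is
   at angle  start i + dir i * 2 pi t  at time t. *)
Record scs_data (n : nat) := SCSData {
  cx : 'I_n -> R;
  cy : 'I_n -> R;
  rng : R;
  start : 'I_n -> R;
  dir : 'I_n -> R
}.

Definition angeq (a b : R) : Prop := exists z : Z, a = b + 2 * PI * IZR z.

Definition cdist n (S : scs_data n) (i j : 'I_n) : R :=
  sqrt ((cx S i - cx S j) ^ 2 + (cy S i - cy S j) ^ 2).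

Definition valid_system n (S : scs_data n) : Prop :=
  0 < rng S /\ forall i j : 'I_n, i <> j -> 2 < cdist S i j.

Definition adj n (S : scs_data n) (i j : 'I_n) : Prop :=
  i <> j /\ cdist S i j <= 2 + rng S.

(* the angle th on C_i is the link position phi_ij, i.e. the point of C_i
   at angle th is the point of C_i closest to C_j *)
Definition at_link n (S : scs_data n) (i j : 'I_n) (th : R) : Prop :=
  cos th * cdist S i j = cx S j - cx S i /\
  sin th * cdist S i j = cy S j - cy S i.

Definition spos n (S : scs_data n) (i : 'I_n) (t : R) : R :=
  start S i + dir S i * (2 * PI * t).

Definition sync_schedule n (S : scs_data n) : Prop :=
  (forall i, dir S i = 1 \/ dir S i = -1) /\
  forall i j, adj S i j ->
    dir S i = - dir S j /\
    forall t, 0 <= t -> (at_link S i j (spos S i t) <-> at_link S j i (spos S j t)).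

(* A run of a partial SCS.  Robots are indexed by their initial circles;
   loc k t = Some i : robot k is on C_i at time t (hence at angle spos S i t),
   loc k t = None   : robot k has left the system. *)
Definition can_switch n (S : scs_data n) (loc : 'I_n -> R -> option 'I_n)
    (i j : 'I_n) (t : R) : Prop :=
  adj S i j /\ at_link S i j (spos S i t) /\
  (* C_j is empty (just before time t) *)
  exists eps, 0 < eps <= t /\
    forall k' s, t - eps < s < t -> loc k' s <> Some j.

Definition partial_scs_run n (S : scs_data n) (loc : 'I_n -> R -> option 'I_n)
  : Prop :=
  (* initially one robot per circle (robots may leave already at time 0) *)
  (forall k, loc k 0 = Some k \/ loc k 0 = None) /\
  (forall k t t', 0 <= t <= t' -> loc k t = None -> loc k t' = None) /\
  (forall k t, 0 <= t -> exists eps, 0 < eps /\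
     forall s, t <= s < t + eps -> loc k s = loc k t) /\
  (forall k t, 0 < t -> exists eps o, 0 < eps <= t /\
     forall s, t - eps < s < t -> loc k s = o) /\
  (* switching rule: a robot arriving on C_i at phi_ij with C_j empty
     passes to C_j; otherwise it stays on its circle (or leaves) *)
  (forall k t i eps, 0 < t -> 0 < eps <= t ->
     (forall s, t - eps < s < t -> loc k s = Some i) ->
     loc k t = None \/
     (loc k t = Some i /\ ~ (exists j, can_switch S loc i j t)) \/
     (exists j, loc k t = Some j /\ can_switch S loc i j t)).

Definition islink n (S : scs_data n) (i : 'I_n) (th : R) : Prop :=
  exists j, adj S i j /\ at_link S i j th.

Definition no_link_inside n (S : scs_data n) (i : 'I_n) (th l : R) : Prop :=
  forall s, 0 < s < l -> ~ islink S i (th + dir S i * s).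

(* ring_move S i th j th' L : a path along a ring from the point of C_i at
   angle th to the point of C_j at angle th', of length L, whose first step
   is motion along C_i (or which is empty). Reaching a link position phi_ij
   the traced point passes (at no cost) to C_j at phi_ji. *)
Inductive ring_move n (S : scs_data n) : 'I_n -> R -> 'I_n -> R -> R -> Prop :=
| rm_nil : forall i th th', angeq th th' -> ring_move S i th i th' 0
| rm_arc : forall i th l th', 0 < l -> no_link_inside S i th l ->
    angeq (th + dir S i * l) th' -> ring_move S i th i th' l
| rm_jump : forall i th l j thj q thq L, 0 < l -> no_link_inside S i th l ->
    adj S i j -> at_link S i j (th + dir S i * l) -> at_link S j i thj ->
    ring_move S j thj q thq L -> ring_move S i th q thq (l + L).

(* a path along a ring: a point lying at a link position phi_ij of C_i lies
   on two rings; along one of them it first passes to C_j at phi_ji. *)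
Definition ring_path n (S : scs_data n) (i : 'I_n) (th : R) (q : 'I_n) (thq L : R)
  : Prop :=
  ring_move S i th q thq L \/
  exists j thj, adj S i j /\ at_link S i j th /\ at_link S j i thj /\
                ring_move S j thj q thq L.

(* A point travelling along a ring at unit angular speed stays on the
   schedule: if it starts at the scheduled position of its circle at time
   tau, then after a path of length L it is at the scheduled position of its
   current circle at time tau + L/(2 pi).  On an arc this is the definition
   of the schedule; at a link position phi_ij the synchronization condition
   says that the robot of C_j is at phi_ji at the same moment.  Hence a ring
   path of length L from the robot on C_a to the robot on C_b at time t ends
   at the angles spos b t and spos b (t + L/(2 pi)) simultaneously, which
   forces L to be a multiple of 2 pi; it is nonnegative since it is a sum of
   arc lengths. *)

From Stdlib Require Import Reals Lra ZArith.
From mathcomp Require Import ssreflect ssrfun ssrbool eqtype ssrnat fintype.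

Set Implicit Arguments.
Local Open Scope R_scope.

Lemma cos_sin_2PI_mult (z : Z) :
  cos (2 * PI * IZR z) = 1 /\ sin (2 * PI * IZR z) = 0.
Proof.
have sinz : sin (PI * IZR z) = 0 by apply: sin_eq_0_1; exists z; ring.
rewrite (_ : 2 * PI * IZR z = 2 * (PI * IZR z)); last by ring.
by rewrite cos_2a_sin sin_2a sinz; split; ring.
Qed.

Lemma cos_add_2PI_mult x z : cos (x + 2 * PI * IZR z) = cos x.
Proof. by rewrite cos_plus; case: (cos_sin_2PI_mult z) => -> ->; ring. Qed.

Lemma sin_add_2PI_mult x z : sin (x + 2 * PI * IZR z) = sin x.
Proof. by rewrite sin_plus; case: (cos_sin_2PI_mult z) => -> ->; ring. Qed.

Lemma angeq_refl a : angeq a a.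
Proof. by exists 0%Z; ring. Qed.

Lemma angeq_sym a b : angeq a b -> angeq b a.
Proof. by move=> [z ->]; exists (- z)%Z; rewrite opp_IZR; ring. Qed.

Lemma angeq_trans a b c : angeq a b -> angeq b c -> angeq a c.
Proof. by move=> [z ->] [w ->]; exists (w + z)%Z; rewrite plus_IZR; ring. Qed.

Lemma angeq_addr a b l : angeq a b -> angeq (a + l) (b + l).
Proof. by move=> [z ->]; exists z; ring. Qed.

Lemma cos_sin_angeq a b : cos a = cos b -> sin a = sin b -> angeq a b.
Proof.
move=> ecos esin; set x := a - b.
have cosx : cos x = 1.
  by rewrite /x cos_minus ecos esin; have := sin2_cos2 b; rewrite /Rsqr; lra.
have sinx2 : sin (x / 2) = 0.
  have := cos_2a_sin (x / 2).
  by rewrite (_ : 2 * (x / 2) = x) ?cosx; [nra | field].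
have [k ek] := sin_eq_0_0 _ sinx2.
exists k; have : x = 2 * (x / 2) by field.
by rewrite ek /x; lra.
Qed.

Lemma at_link_angeq n (S : scs_data n) i j a b :
  valid_system S -> i <> j -> at_link S i j a -> at_link S i j b -> angeq a b.
Proof.
move=> [_ far] nij [ca sa] [cb sb]; have := far i j nij => dij.
by apply: cos_sin_angeq; apply: (Rmult_eq_reg_r (cdist S i j)); lra.
Qed.

Lemma at_link_angeq_shift n (S : scs_data n) i j a b :
  at_link S i j a -> angeq a b -> at_link S i j b.
Proof.
by move=> [ca sa] [z eab]; subst a; rewrite /at_link -(cos_add_2PI_mult b z)
  -(sin_add_2PI_mult b z).
Qed.

Lemma spos_addr n (S : scs_data n) i tau l :
  spos S i tau + dir S i * l = spos S i (tau + l / (2 * PI)).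
Proof. by rewrite /spos; have := PI_RGT_0; move=> ?; field; lra. Qed.

Section Schedule.

Variables (n : nat) (S : scs_data n).
Hypotheses (validS : valid_system S) (syncS : sync_schedule S).

Definition on_schedule (i : 'I_n) (th tau : R) : Prop := angeq th (spos S i tau).

Lemma on_schedule_link_transfer i j th th' tau :
  0 <= tau -> adj S i j -> at_link S i j th -> at_link S j i th' ->
  on_schedule i th tau -> on_schedule j th' tau.
Proof.
move=> tau_ge0 aij linki linkj thi.
have [_ /(_ tau tau_ge0) [sync _]] := syncS.2 i j aij.
have linkj' := sync (at_link_angeq_shift linki thi).
exact: at_link_angeq validS (fun e => aij.1 (esym e)) linkj linkj'.
Qed.

Lemma ring_move_on_schedule i th q thq L :
  ring_move S i th q thq L -> forall tau, 0 <= tau -> on_schedule i th tau ->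
  on_schedule q thq (tau + L / (2 * PI)) /\ 0 <= L.
Proof.
have PI_gt0 := PI_RGT_0.
have arc_on_schedule i' th' l tau : on_schedule i' th' tau ->
    on_schedule i' (th' + dir S i' * l) (tau + l / (2 * PI)).
  by rewrite /on_schedule -spos_addr => /angeq_addr.
elim=> [i' th' th'' e | i' th' l th'' l_gt0 _ e
       | i' th' l j thj q' thq' L' l_gt0 _ aij linki linkj _ IH] tau tau_ge0 thi.
- split; last lra.
  rewrite (_ : tau + 0 / (2 * PI) = tau); last by field; lra.
  exact: angeq_trans (angeq_sym e) thi.
- split; last lra.
  exact: angeq_trans (angeq_sym e) (arc_on_schedule _ _ _ _ thi).
- have tau'_ge0 : 0 <= tau + l / (2 * PI).
    by apply: Rplus_le_le_0_compat => //; apply: Rlt_le; apply: Rdiv_lt_0_compat; lra.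
  have thj_on := on_schedule_link_transfer tau'_ge0 aij linki linkj
    (arc_on_schedule _ _ _ _ thi).
  have [thq_on L'_ge0] := IH _ tau'_ge0 thj_on.
  split; last lra.
  by rewrite (_ : tau + (l + L') / (2 * PI) =
                  tau + l / (2 * PI) + L' / (2 * PI)); last by field; lra.
Qed.

Lemma ring_path_on_schedule a b t L :
  0 <= t -> ring_path S a (spos S a t) b (spos S b t) L ->
  on_schedule b (spos S b t) (t + L / (2 * PI)) /\ 0 <= L.
Proof.
move=> t_ge0 [move_ab | [j [thj [aaj [linka [linkj move_jb]]]]]].
- exact: ring_move_on_schedule move_ab _ t_ge0 (angeq_refl _).
- apply: ring_move_on_schedule move_jb _ (t_ge0) _.
  exact: on_schedule_link_transfer t_ge0 aaj linka linkj (angeq_refl _).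
Qed.

Lemma on_schedule_period i tau L :
  on_schedule i (spos S i tau) (tau + L / (2 * PI)) ->
  exists z : Z, L = 2 * PI * IZR z.
Proof.
rewrite /on_schedule -spos_addr => -[z ez].
by case: (syncS.1 i) => di; rewrite di in ez; [exists (- z)%Z; rewrite opp_IZR | exists z];
  lra.
Qed.

End Schedule.

Lemma nonneg_2PI_mult_nat (z : Z) :
  0 <= 2 * PI * IZR z -> exists m : nat, 2 * PI * IZR z = 2 * PI * INR m.
Proof.
move=> ge0; have PI_gt0 := PI_RGT_0.
have z_ge0 : (0 <= z)%Z by apply: le_IZR; nra.
by exists (Z.to_nat z); rewrite INR_IZR_INZ Z2Nat.id.
Qed.

Theorem lemma8 (n : nat) (S : scs_data n) (loc : 'I_n -> R -> option 'I_n) :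
  valid_system S -> sync_schedule S -> partial_scs_run S loc ->
  forall (t : R) (k1 k2 a b : 'I_n) (L : R),
    (0 <= t)%R -> k1 <> k2 ->
    loc k1 t = Some a -> loc k2 t = Some b ->
    ring_path S a (spos S a t) b (spos S b t) L ->
    exists m : nat, L = (2 * PI * INR m)%R.
Proof.
move=> validS syncS _ t k1 k2 a b L t_ge0 _ _ _ path_ab.
have [b_on L_ge0] := ring_path_on_schedule validS syncS t_ge0 path_ab.
have [z ez] := on_schedule_period syncS b_on.
by rewrite ez in L_ge0 *; apply: nonneg_2PI_mult_nat.
Qed.
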